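(* Let $\Lambda=\{ab^ic\mid i\geq 1\}$. The submonoid of $\Pi_2=\langle a,b,c\mid (ab^ic)^2=1\ (i\geq 1)\rangle$ generated by the elements represented by the words of $\Lambda$ is equal to the group of units $U(\Pi_2)$.
   Context: The group of units $U(M)$ of a monoid $M$ is the set of elements having both a left and a right inverse. *)

(* The monoid Pi_2 = < a, b, c | (a b^i c)^2 = 1 (i >= 1) > is
   represented as words over {a,b,c} modulo the congruence generated by the
   defining relations; elements of Pi_2 are congruence classes of words. *)
From Stdlib Require Import List Arith.
Import ListNotations.

Inductive letter : Type := la | lb | lc.

Definition word := list letter.

Definition lam (i : nat) : word := la :: repeat lb i ++ [lc].

Inductive pi2_eq : word -> word -> Prop :=
| pi2_rel : forall i, 1 <= i -> pi2_eq (lam i ++ lam i) []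
| pi2_refl : forall u, pi2_eq u u
| pi2_sym : forall u v, pi2_eq u v -> pi2_eq v u
| pi2_trans : forall u v w, pi2_eq u v -> pi2_eq v w -> pi2_eq u w
| pi2_ctx : forall x y u v, pi2_eq u v -> pi2_eq (x ++ u ++ y) (x ++ v ++ y).

Definition pi2_unit (w : word) : Prop :=
  (exists v, pi2_eq (w ++ v) []) /\ (exists v, pi2_eq (v ++ w) []).

Definition in_Lambda_submonoid (w : word) : Prop :=
  exists l : list nat, Forall (fun i => 1 <= i) l /\ pi2_eq w (concat (map lam l)).

(* Products of the involutions a b^i c are clearly units. For the converse we
   use normal forms. Deleting factors (a b^i c)^2 is a confluent rewriting
   system, realised by a stack machine ([push], [run]) that reads a word and
   keeps the reduced word read so far, reversed, on a stack. Reading a word on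
   a reduced stack is invariant under the defining relations, so every word w
   is equal in Pi_2 to its reduced normal form n = rev (run [] w).
   If w has a right inverse v, reading v from the stack of n empties it; since
   only squares (a b^i c)^2 are ever deleted, n is a product of the a b^i c and
   of "open" factors a b^k. Dually, via the anti-automorphism reversing words
   and exchanging a and c, if w has a left inverse then n is a product of the
   a b^i c and of "closing" factors b^k c. A word of both shapes is a product
   of the a b^i c, which proves the theorem. *)

From Stdlib Require Import List Arith Lia Bool.
Import ListNotations.

Lemma pi2_app_l : forall x u v, pi2_eq u v -> pi2_eq (x ++ u) (x ++ v).
Proof.
  intros x u v H. pose proof (pi2_ctx x [] u v H) as H'. rewrite !app_nil_r in H'. exact H'.
Qed.

Lemma pi2_app_r : forall y u v, pi2_eq u v -> pi2_eq (u ++ y) (v ++ y).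
Proof. intros y u v H. exact (pi2_ctx [] y u v H). Qed.

Fixpoint split_bs (r : word) : nat * word :=
  match r with
  | lb :: r' => let (n, q) := split_bs r' in (S n, q)
  | _ => (0, r)
  end.

Definition no_lead_b (q : word) : Prop :=
  match q with lb :: _ => False | _ => True end.

Lemma split_bs_spec : forall r n q, split_bs r = (n, q) ->
  r = repeat lb n ++ q /\ no_lead_b q.
Proof.
  induction r as [|x r IH]; intros n q H; simpl in H.
  - injection H as <- <-. split; [reflexivity | exact I].
  - destruct x.
    + injection H as <- <-. split; [reflexivity | exact I].
    + destruct (split_bs r) as [m q'] eqn:E. injection H as <- <-.
      destruct (IH _ _ eq_refl) as [-> Hq]. split; [reflexivity | exact Hq].
    + injection H as <- <-. split; [reflexivity | exact I].
Qed.

Lemma split_bs_repeat : forall i q, no_lead_b q -> split_bs (repeat lb i ++ q) = (i, q).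
Proof.
  induction i as [|i IH]; intros q Hq; simpl.
  - destruct q as [|[] q]; [reflexivity | reflexivity | contradiction | reflexivity].
  - rewrite (IH q Hq). reflexivity.
Qed.

Lemma repeat_b_inj : forall i j q1 q2, no_lead_b q1 -> no_lead_b q2 ->
  repeat lb i ++ q1 = repeat lb j ++ q2 -> i = j /\ q1 = q2.
Proof.
  intros i j q1 q2 H1 H2 E.
  pose proof (split_bs_repeat i q1 H1) as E1.
  rewrite E, (split_bs_repeat j q2 H2) in E1. injection E1 as -> ->. auto.
Qed.

(* Pushing a letter on the stack; pushing c onto a stack whose top reads
   (a b^i c a b^i) reversed, with i >= 1, cancels the square (a b^i c)^2. *)
Definition push (r : word) (l : letter) : word :=
  match l with
  | lc =>
    let (i, q) := split_bs r in
    match q with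
    | la :: lc :: q' =>
      let (j, q'') := split_bs q' in
      match q'' with
      | la :: r' => if Nat.eqb i j && Nat.leb 1 i then r' else lc :: r
      | _ => lc :: r
      end
    | _ => lc :: r
    end
  | _ => l :: r
  end.

Definition run (t w : word) : word := fold_left push w t.

Definition square_top (i : nat) (r : word) : word :=
  repeat lb i ++ la :: lc :: repeat lb i ++ la :: r.

Lemma push_square_top : forall i r, 1 <= i -> push (square_top i r) lc = r.
Proof.
  intros i r Hi. unfold push, square_top.
  rewrite split_bs_repeat by exact I.
  rewrite split_bs_repeat by exact I.
  rewrite Nat.eqb_refl. destruct i; [lia | reflexivity].
Qed.

Lemma push_c_cases : forall r,
  push r lc = lc :: r \/ exists i r', 1 <= i /\ r = square_top i r' /\ push r lc = r'.
Proof.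
  intro r. unfold push.
  destruct (split_bs r) as [i q] eqn:E1. apply split_bs_spec in E1 as [-> _].
  destruct q as [|[] [|[] q]]; auto.
  destruct (split_bs q) as [j q''] eqn:E2. apply split_bs_spec in E2 as [-> _].
  destruct q'' as [|[] r']; auto.
  destruct (Nat.eqb i j && Nat.leb 1 i) eqn:B; auto.
  apply andb_prop in B as [B1 B2]. apply Nat.eqb_eq in B1 as <-. apply Nat.leb_le in B2.
  right. exists i, r'. auto.
Qed.

Lemma push_c_spec : forall r,
  (exists i r', 1 <= i /\ r = square_top i r' /\ push r lc = r') \/
  (push r lc = lc :: r /\ forall i r', 1 <= i -> r <> square_top i r').
Proof.
  intro r. destruct (push_c_cases r) as [E | H]; [|left; exact H].
  right. split; [exact E|]. intros i r' Hi ->.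
  rewrite push_square_top in E by exact Hi.
  apply (f_equal (@length letter)) in E. unfold square_top in E.
  simpl in E. rewrite length_app in E. simpl in E. rewrite length_app in E. simpl in E. lia.
Qed.

Definition rlam (i : nat) : word := lc :: repeat lb i ++ [la].

Definition reduced_stack (r : word) : Prop :=
  forall x y i, 1 <= i -> r <> x ++ rlam i ++ rlam i ++ y.

Lemma rlam_square_top : forall i r, rlam i ++ rlam i ++ r = lc :: square_top i r.
Proof. intros. unfold square_top, rlam. simpl. rewrite <- !app_assoc. reflexivity. Qed.

Lemma reduced_stack_nil : reduced_stack [].
Proof. intros [|] y i _ E; discriminate. Qed.

Lemma reduced_stack_tail : forall l r, reduced_stack (l :: r) -> reduced_stack r.
Proof. intros l r H x y i Hi E. apply (H (l :: x) y i Hi). rewrite E. reflexivity. Qed.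

Lemma reduced_stack_cons : forall l r, reduced_stack r ->
  (l <> lc \/ forall i r', 1 <= i -> r <> square_top i r') -> reduced_stack (l :: r).
Proof.
  intros l r H Hl [|z x] y i Hi E.
  - rewrite app_nil_l, rlam_square_top in E. injection E as -> E.
    destruct Hl as [Hl | Hl]; [exact (Hl eq_refl) | exact (Hl i y Hi E)].
  - injection E as _ E. exact (H x y i Hi E).
Qed.

Lemma reduced_stack_push : forall r l, reduced_stack r -> reduced_stack (push r l).
Proof.
  intros r l H. destruct l; try (apply reduced_stack_cons; [exact H | left; discriminate]).
  destruct (push_c_spec r) as [[i [r' [_ [-> ->]]]] | [-> Hn]].
  - intros x y j Hj E. apply (H (repeat lb i ++ la :: lc :: repeat lb i ++ la :: x) y j Hj).
    unfold square_top. rewrite E. rewrite <- !app_assoc. simpl. rewrite <- !app_assoc. reflexivity.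
  - apply reduced_stack_cons; [exact H | right; exact Hn].
Qed.

Lemma run_app : forall t x y, run t (x ++ y) = run (run t x) y.
Proof. intros. unfold run. apply fold_left_app. Qed.

Lemma reduced_stack_run : forall w t, reduced_stack t -> reduced_stack (run t w).
Proof. induction w; intros t H; [exact H|]. apply IHw, reduced_stack_push, H. Qed.

Lemma rev_square_top : forall i r, rev (square_top i r) = (rev r ++ lam i) ++ la :: repeat lb i.
Proof.
  intros. unfold square_top, lam. rewrite !rev_app_distr. simpl.
  rewrite !rev_app_distr, !rev_repeat. simpl. rewrite <- !app_assoc. simpl. rewrite <- !app_assoc. reflexivity.
Qed.

Lemma push_sound : forall t l, pi2_eq (rev (push t l)) (rev t ++ [l]).
Proof.
  intros t l. destruct l; try apply pi2_refl.
  destruct (push_c_spec t) as [[i [r' [Hi [-> ->]]]] | [-> _]]; [|apply pi2_refl].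
  rewrite rev_square_top, <- !app_assoc. apply pi2_sym.
  rewrite <- (app_nil_r (rev r')) at 2. apply pi2_app_l, pi2_rel, Hi.
Qed.

Lemma run_sound : forall w t, pi2_eq (rev (run t w)) (rev t ++ w).
Proof.
  induction w as [|l w IH]; intro t.
  - rewrite app_nil_r. apply pi2_refl.
  - change (run t (l :: w)) with (run (push t l) w).
    eapply pi2_trans; [apply IH|].
    replace (rev t ++ l :: w) with ((rev t ++ [l]) ++ w) by (rewrite <- app_assoc; reflexivity).
    apply pi2_app_r, push_sound.
Qed.

Lemma run_repeat_b : forall i r, run r (repeat lb i) = repeat lb i ++ r.
Proof.
  intros i r. rewrite <- (rev_repeat i lb) at 1.
  induction i as [|i IH]; [reflexivity|].
  simpl. rewrite run_app, IH. reflexivity.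
Qed.

Lemma run_lam : forall t i, run t (lam i) = push (repeat lb i ++ la :: t) lc.
Proof.
  intros. change (lam i) with ([la] ++ repeat lb i ++ [lc]).
  rewrite !run_app, run_repeat_b. reflexivity.
Qed.

(* On a reduced stack, reading (a b^i c)^2 is the identity: this is where
   the overlaps of the relations are checked to be harmless (confluence). *)
Lemma run_lam_square : forall t i, reduced_stack t -> 1 <= i -> run t (lam i ++ lam i) = t.
Proof.
  intros t i Ht Hi. rewrite run_app, (run_lam t i).
  destruct (push_c_spec (repeat lb i ++ la :: t)) as [[j [r' [Hj [E ->]]]] | [-> _]].
  - unfold square_top in E. apply repeat_b_inj in E as [<- E]; [|exact I|exact I].
    injection E as ->. rewrite run_lam.
    destruct (push_c_spec (repeat lb i ++ la :: r')) as [[k [r'' [Hk [E _]]]] | [-> _]].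
    + exfalso. unfold square_top in E. apply repeat_b_inj in E as [<- E]; [|exact I|exact I].
      injection E as ->. apply (Ht [] r'' i Hi). rewrite rlam_square_top. reflexivity.
    + reflexivity.
  - rewrite run_lam. apply push_square_top, Hi.
Qed.

Lemma run_invariant : forall u v, pi2_eq u v ->
  forall t, reduced_stack t -> run t u = run t v.
Proof.
  induction 1; intros t Ht.
  - rewrite run_lam_square; auto.
  - reflexivity.
  - symmetry; auto.
  - rewrite IHpi2_eq1, IHpi2_eq2; auto.
  - rewrite !run_app, IHpi2_eq; auto. apply reduced_stack_run, Ht.
Qed.

Lemma run_reduced : forall r, reduced_stack r -> run [] (rev r) = r.
Proof.
  induction r as [|l r IH]; intro H; [reflexivity|].
  simpl. rewrite run_app, (IH (reduced_stack_tail _ _ H)).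
  destruct l; try reflexivity.
  destruct (push_c_spec r) as [[i [r' [Hi [E _]]]] | [E _]]; [|exact E].
  exfalso. apply (H [] r' i Hi). rewrite E, rlam_square_top. reflexivity.
Qed.

Inductive open_prod : word -> Prop :=
| open_nil : open_prod []
| open_lam : forall x i, 1 <= i -> open_prod x -> open_prod (x ++ lam i)
| open_ab : forall x k, open_prod x -> open_prod (x ++ la :: repeat lb k).

Lemma open_prod_snoc : forall x l, open_prod (x ++ [l]) -> open_prod x.
Proof.
  intros x l H. remember (x ++ [l]) as z eqn:Ez. destruct H as [|x' i _ H|x' k H].
  - destruct x; discriminate.
  - unfold lam in Ez. rewrite app_comm_cons, app_assoc in Ez.
    apply app_inj_tail in Ez as [<- _]. apply open_ab, H.
  - destruct k as [|k].
    + apply app_inj_tail in Ez as [<- _]. exact H.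
    + change (repeat lb (S k)) with (lb :: repeat lb k) in Ez.
      rewrite repeat_cons, app_comm_cons, app_assoc in Ez.
      apply app_inj_tail in Ez as [<- _]. apply open_ab, H.
Qed.

(* If reading u empties the reduced stack r, then every letter of rev r is
   eventually cancelled, which forces rev r to be an open product. *)
Lemma run_to_empty : forall u r, reduced_stack r -> run r u = [] -> open_prod (rev r).
Proof.
  induction u as [|l u IH]; intros r Hr Hu.
  - simpl in Hu. subst. constructor.
  - change (run r (l :: u)) with (run (push r l) u) in Hu.
    pose proof (IH _ (reduced_stack_push r l Hr) Hu) as H.
    destruct l; try exact (open_prod_snoc _ _ H).
    destruct (push_c_spec r) as [[i [r' [Hi [-> E]]]] | [E _]]; rewrite E in H.
    + rewrite rev_square_top. apply open_ab, open_lam; assumption.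
    + exact (open_prod_snoc _ _ H).
Qed.

Lemma right_invertible_open : forall w v r, pi2_eq (w ++ v) [] ->
  reduced_stack r -> pi2_eq (rev r) w -> open_prod (rev r).
Proof.
  intros w v r Hv Hr Hw. apply (run_to_empty v r Hr).
  rewrite <- (run_reduced r Hr) at 1. rewrite <- run_app.
  apply (run_invariant _ _ (pi2_trans _ _ _ (pi2_app_r v _ _ Hw) Hv) [] reduced_stack_nil).
Qed.

(* The anti-automorphism of the free monoid reversing words and exchanging
   a and c; it fixes each a b^i c, hence induces an anti-automorphism of Pi_2. *)
Definition swap_ac (l : letter) : letter := match l with la => lc | lb => lb | lc => la end.

Definition mirror (w : word) : word := rev (map swap_ac w).

Lemma mirror_app : forall x y, mirror (x ++ y) = mirror y ++ mirror x.
Proof. intros. unfold mirror. rewrite map_app, rev_app_distr. reflexivity. Qed.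

Lemma mirror_involutive : forall w, mirror (mirror w) = w.
Proof.
  intro w. unfold mirror. rewrite map_rev, rev_involutive, map_map.
  induction w as [|[] w IH]; simpl; congruence.
Qed.

Lemma mirror_rev : forall w, mirror (rev w) = rev (mirror w).
Proof. intro w. unfold mirror. rewrite map_rev. reflexivity. Qed.

Lemma mirror_repeat_b : forall k, mirror (repeat lb k) = repeat lb k.
Proof.
  intro k. unfold mirror. rewrite <- rev_repeat at 2. f_equal.
  induction k as [|k IH]; simpl; congruence.
Qed.

Lemma mirror_lam : forall i, mirror (lam i) = lam i.
Proof.
  intro i. change (lam i) with ([la] ++ repeat lb i ++ [lc]).
  rewrite !mirror_app, mirror_repeat_b. reflexivity.
Qed.

Lemma mirror_rlam : forall i, mirror (rlam i) = rlam i.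
Proof.
  intro i. change (rlam i) with ([lc] ++ repeat lb i ++ [la]).
  rewrite !mirror_app, mirror_repeat_b. reflexivity.
Qed.

Lemma mirror_pi2_eq : forall u v, pi2_eq u v -> pi2_eq (mirror u) (mirror v).
Proof.
  induction 1.
  - rewrite mirror_app, mirror_lam. apply pi2_rel, H.
  - apply pi2_refl.
  - apply pi2_sym; assumption.
  - eapply pi2_trans; eassumption.
  - rewrite !mirror_app, <- !app_assoc. apply pi2_ctx, IHpi2_eq.
Qed.

Lemma mirror_reduced_stack : forall r, reduced_stack r -> reduced_stack (mirror r).
Proof.
  intros r H x y i Hi E. apply (H (mirror y) (mirror x) i Hi).
  rewrite <- (mirror_involutive r), E, !mirror_app, mirror_rlam, <- !app_assoc.
  reflexivity.
Qed.

Inductive close_prod : word -> Prop :=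
| close_nil : close_prod []
| close_lam : forall x i, 1 <= i -> close_prod x -> close_prod (lam i ++ x)
| close_bc : forall x k, close_prod x -> close_prod (repeat lb k ++ lc :: x).

Lemma mirror_open_prod : forall u, open_prod u -> close_prod (mirror u).
Proof.
  induction 1 as [|x i Hi _ IH|x k _ IH].
  - constructor.
  - rewrite mirror_app, mirror_lam. constructor; assumption.
  - rewrite mirror_app. change (la :: repeat lb k) with ([la] ++ repeat lb k).
    rewrite mirror_app, mirror_repeat_b, <- app_assoc. constructor. exact IH.
Qed.

Lemma left_invertible_close : forall w v r, pi2_eq (v ++ w) [] ->
  reduced_stack r -> pi2_eq (rev r) w -> close_prod (rev r).
Proof.
  intros w v r Hv Hr Hw.
  rewrite <- (mirror_involutive (rev r)). apply mirror_open_prod.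
  rewrite mirror_rev. apply (right_invertible_open (mirror w) (mirror v)).
  - rewrite <- mirror_app. apply (mirror_pi2_eq _ _ Hv).
  - apply mirror_reduced_stack, Hr.
  - rewrite <- mirror_rev. apply mirror_pi2_eq, Hw.
Qed.

Lemma a_free_bs_c : forall k x y, repeat lb k ++ [lc] <> x ++ la :: y.
Proof.
  intros k x y E.
  assert (Ha : In la (repeat lb k ++ [lc])) by (rewrite E; apply in_or_app; right; left; reflexivity).
  apply in_app_or in Ha as [Ha | [Ha | []]]; [apply repeat_spec in Ha|]; discriminate.
Qed.

(* A close product ending with a b^i c stays one when this factor is removed:
   the factor cannot straddle two generators, since each contains at most one a. *)
Lemma close_prod_unlam : forall z, close_prod z -> forall x i, z = x ++ lam i -> close_prod x.
Proof.
  induction 1 as [|x' j Hj _ IH|x' k _ IH]; intros x i E.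
  - destruct x; discriminate.
  - apply app_eq_app in E as [[|y l] [[E1 E2] | [-> E2]]].
    + rewrite app_nil_r in E1. subst x. rewrite <- (app_nil_r (lam j)).
      constructor; [exact Hj | constructor].
    + constructor; [exact Hj | exact (IH _ _ E2)].
    + unfold lam in E2. injection E2 as <- _. destruct x as [|z x]; [constructor|].
      injection E1 as _ E1. exfalso. exact (a_free_bs_c j x l E1).
    + constructor; [exact Hj | exact (IH _ _ E2)].
  - change (lc :: x') with ([lc] ++ x') in E. rewrite app_assoc in E.
    apply app_eq_app in E as [[|y l] [[E1 E2] | [-> E2]]].
    + rewrite app_nil_r in E1. subst x. apply (close_bc [] k), close_nil.
    + rewrite <- app_assoc. constructor. exact (IH _ _ E2).
    + unfold lam in E2. injection E2 as <- _. exfalso. exact (a_free_bs_c k x l E1).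
    + rewrite <- app_assoc. constructor. exact (IH _ _ E2).
Qed.

Lemma close_prod_last : forall w, close_prod w -> w = [] \/ exists w', w = w' ++ [lc].
Proof.
  induction 1 as [|x i _ _ [-> | [w' ->]]|x k _ [-> | [w' ->]]]; auto; right.
  - exists (la :: repeat lb i). rewrite app_nil_r. reflexivity.
  - exists (lam i ++ w'). apply app_assoc.
  - exists (repeat lb k). reflexivity.
  - exists (repeat lb k ++ lc :: w'). rewrite <- app_assoc. reflexivity.
Qed.

Lemma open_close_lambda : forall w, open_prod w -> close_prod w ->
  exists l, Forall (fun i => 1 <= i) l /\ w = concat (map lam l).
Proof.
  induction 1 as [|x i Hi _ IH|x k _ _]; intro Hc.
  - exists []. split; [constructor | reflexivity].
  - destruct (IH (close_prod_unlam _ Hc x i eq_refl)) as [l [Hl ->]].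
    exists (l ++ [i]). split.
    + apply Forall_app. split; [exact Hl | constructor; [exact Hi | constructor]].
    + rewrite map_app, concat_app. simpl. rewrite app_nil_r. reflexivity.
  - exfalso. destruct (close_prod_last _ Hc) as [E | [w' E]]; [destruct x; discriminate|].
    apply (f_equal (@rev letter)) in E. rewrite rev_app_distr, rev_unit in E. simpl in E.
    rewrite rev_repeat in E. destruct k; discriminate.
Qed.

Lemma lambda_product_inverse : forall l, Forall (fun i => 1 <= i) l ->
  pi2_eq (concat (map lam l) ++ concat (map lam (rev l))) [].
Proof.
  induction 1 as [|i l Hi _ IH]; [apply pi2_refl|].
  change (concat (map lam (i :: l))) with (lam i ++ concat (map lam l)).
  change (rev (i :: l)) with (rev l ++ [i]).
  rewrite map_app, concat_app. change (concat (map lam [i])) with (lam i ++ []).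
  rewrite app_nil_r, <- !app_assoc, (app_assoc (concat (map lam l))).
  apply pi2_trans with (lam i ++ [] ++ lam i); [apply pi2_ctx, IH | apply pi2_rel, Hi].
Qed.

Lemma lambda_product_unit : forall l, Forall (fun i => 1 <= i) l -> pi2_unit (concat (map lam l)).
Proof.
  intros l Hl. split; exists (concat (map lam (rev l))).
  - apply lambda_product_inverse, Hl.
  - rewrite <- (rev_involutive l) at 2. apply lambda_product_inverse, Forall_rev, Hl.
Qed.

Lemma pi2_unit_compat : forall u w, pi2_eq u w -> pi2_unit u -> pi2_unit w.
Proof.
  intros u w E [[v Hv] [v' Hv']]. split.
  - exists v. exact (pi2_trans _ _ _ (pi2_app_r v _ _ (pi2_sym _ _ E)) Hv).
  - exists v'. exact (pi2_trans _ _ _ (pi2_app_l v' _ _ (pi2_sym _ _ E)) Hv').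
Qed.

Theorem mainTheorem8 : forall w : word, in_Lambda_submonoid w <-> pi2_unit w.
Proof.
  intro w. split.
  - intros [l [Hl Hw]]. exact (pi2_unit_compat _ _ (pi2_sym _ _ Hw) (lambda_product_unit l Hl)).
  - intros [[v Hv] [v' Hv']].
    pose (r := run [] w).
    assert (Hr : reduced_stack r) by apply reduced_stack_run, reduced_stack_nil.
    assert (Hrw : pi2_eq (rev r) w) by apply (run_sound w []).
    destruct (open_close_lambda (rev r) (right_invertible_open w v r Hv Hr Hrw)
                (left_invertible_close w v' r Hv' Hr Hrw)) as [l [Hl E]].
    exists l. split; [exact Hl|]. rewrite <- E. apply pi2_sym, Hrw.
Qed.
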